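(* Fix $0<p<1$, $q=1-p$, and integers $L<U$ with $U-L\ge 4$. With the notation of the context, the function $x\mapsto\alpha(x)=\lim_{k\to\infty}\alpha_k(x)$ on the integers $x\in[L,U]$ is the unique solution of the linear system $$\alpha(x)=\begin{cases}0,&x=U,\\ q\,\alpha(x-1),&x=U-1,\\ pq\,\alpha(x)+q\,\alpha(x-1),&x=U-2,\\ pq\,\alpha(x)+p\,\alpha(x+2)-pq\,\alpha(x+1)+q\,\alpha(x-1),&L+1\le x\le U-3,\\ 1,&x=L,\end{cases}$$ and the function $x\mapsto\beta(x)=\lim_{k\to\infty}\beta_k(x)$ on the integers $x\in[L,U]$ is the unique solution of the linear system $$\beta(x)=\begin{cases}1,&x=U,\\ p+q\,\beta(x-1),&x=U-1,\\ p^2+pq\,\beta(x)+q\,\beta(x-1),&x=U-2,\\ pq\,\beta(x)+p\,\beta(x+2)-pq\,\beta(x+1)+q\,\beta(x-1),&L+1\le x\le U-3,\\ 0,&x=L.\end{cases}$$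
   Context: Let $\xi_1,\xi_2,\dots$ be i.i.d. random variables with values in $\{1,-1\}$, $\mathbb{P}(\xi_i=1)=p$, $\mathbb{P}(\xi_i=-1)=q:=1-p$. Define $X_k=-1$ if $\xi_k=-1$; $X_k=2$ if $\xi_k=\xi_{k-1}=1$ (for $k\ge 2$); and $X_k=1$ otherwise (in particular $X_1=1$ when $\xi_1=1$). Let $S_0=0$, $S_k=X_1+\dots+X_k$, and $S^x_k=x+S_k$. For integers $L<U$ and $k\ge 0$ let $\tau^x_k=\min\{l\in\{0,\dots,k\}: S^x_l\le L \text{ or } S^x_l\ge U\}$ if this set is nonempty, and $\tau^x_k=k$ otherwise. Let $\mathcal{A}^x_k=\bigcup_{l=0}^k\{\tau^x_k=l,\ S^x_l\le L\}$, $\mathcal{B}^x_k=\bigcup_{l=0}^k\{\tau^x_k=l,\ S^x_l\ge U\}$, $\alpha_k(x)=\mathbb{P}(\mathcal{A}^x_k)$, $\beta_k(x)=\mathbb{P}(\mathcal{B}^x_k)$. These sequences are nondecreasing in $k$, so the limits $\alpha(x),\beta(x)$ exist. *)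

From HB Require Import structures.
From mathcomp Require Import all_boot all_order all_algebra.
From mathcomp Require Import all_classical all_reals all_analysis.
Set Implicit Arguments. Unset Strict Implicit. Unset Printing Implicit Defensive.
Import Order.TTheory GRing.Theory Num.Theory numFieldNormedType.Exports.
Local Open Scope ring_scope.

(* A realisation of (xi_1,...,xi_k) is a tuple w : k.-tuple bool,
   with w_(n-1) = true  <->  xi_n = 1, and false <-> xi_n = -1. *)
Section Walk.
Variable k : nat.
Variable w : k.-tuple bool.

Definition xi (n : nat) : bool := nth false w n.-1.

Definition Xstep (n : nat) : int :=
  if ~~ xi n then -1
  else if (1 < n)%N && xi n.-1 then 2 else 1.

Definition Ssum (n : nat) : int := \sum_(1 <= i < n.+1) Xstep i.

Definition Sx (x : int) (n : nat) : int := x + Ssum n.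

Definition exits (L U x : int) (l : nat) : bool := (Sx x l <= L) || (U <= Sx x l).

Definition tau (L U x : int) : nat :=
  head k [seq l <- iota 0 k.+1 | exits L U x l].

Definition eventA (L U x : int) : bool :=
  [exists l : 'I_k.+1, (tau L U x == l) && (Sx x l <= L)].
Definition eventB (L U x : int) : bool :=
  [exists l : 'I_k.+1, (tau L U x == l) && (U <= Sx x l)].
End Walk.

Section Prob.
Variable R : realType.
Variable p : R.

Definition weight k (w : k.-tuple bool) : R :=
  \prod_(b <- w) (if b then p else 1 - p).

Definition alpha_k (L U x : int) (k : nat) : R :=
  \sum_(w : k.-tuple bool) weight w * (eventA w L U x)%:R.
Definition beta_k (L U x : int) (k : nat) : R :=
  \sum_(w : k.-tuple bool) weight w * (eventB w L U x)%:R.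

Definition alpha (L U x : int) : R := limn (alpha_k L U x).
Definition beta (L U x : int) : R := limn (beta_k L U x).

Definition alpha_system (L U : int) (f : int -> R) : Prop :=
  let q := 1 - p in
  [/\ f U = 0,
      f (U - 1) = q * f (U - 2),
      f (U - 2) = p * q * f (U - 2) + q * f (U - 3),
      (forall x : int, L + 1 <= x <= U - 3 ->
         f x = p * q * f x + p * f (x + 2) - p * q * f (x + 1) + q * f (x - 1))
    & f L = 1].

Definition beta_system (L U : int) (f : int -> R) : Prop :=
  let q := 1 - p in
  [/\ f U = 1,
      f (U - 1) = p + q * f (U - 2),
      f (U - 2) = p ^+ 2 + p * q * f (U - 2) + q * f (U - 3),
      (forall x : int, L + 1 <= x <= U - 3 ->
         f x = p * q * f x + p * f (x + 2) - p * q * f (x + 1) + q * f (x - 1))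
    & f L = 0].
End Prob.

From Pilot Require Import Defs.
From HB Require Import structures.
From mathcomp Require Import all_boot all_order all_algebra.
From mathcomp Require Import all_classical all_reals all_analysis.
From mathcomp Require Import ring zify.
Import Order.TTheory GRing.Theory Num.Theory numFieldNormedType.Exports.
Local Open Scope ring_scope.

(* The walk is Markov in the pair (position, sign of the last step): after a
   step -1 (or at time 0) the next up-step is +1, after a step +1 it is +2.
   Conditioning on the first step, the exit probability a (last step down) and
   g (last step up) satisfy a x = p g (x+1) + q a (x-1) and
   g x = p g (x+2) + q a (x-1) inside (L, U), with g constant (0 or 1) from U
   on; eliminating g gives the linear systems. The finite-horizon probabilities
   increase with the horizon, so these relations survive the limit.
   Uniqueness: read from the top, the system determines every value from the
   one at U - 2 (each step divides by q), so the homogeneous solutions form at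
   most a line; alpha spans it because alpha (U - 2) > 0, and the boundary
   value at L then forces uniqueness. *)

Definition step (s b : bool) : int := if b then (if s then 2 else 1) else -1.

(* The walk started at [x], driven by the signs [w], when the sign preceding
   [w] is [s]; the walk of the paper starts with [s = false] since X_1 = 1. *)
Definition walk (s : bool) (x : int) (w : seq bool) (n : nat) : int :=
  x + \sum_(i < n) step (nth false (s :: w) i) (nth false w i).

Lemma walk0 s x w : walk s x w 0 = x.
Proof. by rewrite /walk big_ord0 addr0. Qed.

Lemma walk_cons s x b w n : walk s x (b :: w) n.+1 = walk b (x + step s b) w n.
Proof. by rewrite /walk big_ord_recl addrA. Qed.

Lemma Sx_walk k (w : k.-tuple bool) x n : Sx w x n = walk false x w n.
Proof.
rewrite /Sx /Ssum /walk big_add1 /= big_mkord; congr (x + _).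
by apply: eq_bigr => -[[|i] ?] _; rewrite /Xstep /xi /step //=; case: nth.
Qed.

Lemma head_filter_iotaS (P : pred nat) n :
  head n.+1 [seq l <- iota 0 n.+2 | P l] =
  if P 0%N then 0%N else (head n [seq l <- iota 0 n.+1 | P l.+1]).+1.
Proof.
have -> : iota 0 n.+2 = 0%N :: map S (iota 0 n.+1) by rewrite -(iotaDl 1 0).
move: (iota 0 n.+1) => s /=; rewrite filter_map.
by case: (P 0%N) => //; case: [seq _ <- _ | _].
Qed.

Definition outside (L U : int) : pred int := fun y => (y <= L) || (U <= y).

Section StoppedWalk.
Variables stop target : pred int.

Fixpoint stopped_in (s : bool) (x : int) (w : seq bool) : bool :=
  if w is b :: w' then (if stop x then target x else stopped_in b (x + step s b) w')
  else target x.

Lemma stopped_inE s x w :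
  stopped_in s x w =
  target (walk s x w (head (size w) [seq l <- iota 0 (size w).+1 | stop (walk s x w l)])).
Proof.
elim: w s x => [|b w IH] s x /=; first by case: ifP; rewrite walk0.
rewrite head_filter_iotaS walk0; case: (stop x); first by rewrite walk0.
rewrite walk_cons IH; congr (target (walk _ _ _ (head _ _))).
by apply: eq_filter => l; rewrite walk_cons.
Qed.
End StoppedWalk.

Lemma tau_le {k} (w : k.-tuple bool) L U x : (tau w L U x <= k)%N.
Proof.
rewrite /tau; case E: [seq _ <- _ | _] => [//|l s] /=.
have : l \in [seq l <- iota 0 k.+1 | exits w L U x l] by rewrite E mem_head.
by rewrite mem_filter mem_iota => /andP[_ /andP[_]].
Qed.

Lemma exists_tau {k} (w : k.-tuple bool) L U x (P : pred int) :
  [exists l : 'I_k.+1, (tau w L U x == l) && P (Sx w x l)] = P (Sx w x (tau w L U x)).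
Proof.
apply/existsP/idP => [[l /andP[/eqP -> //]] | HP].
by exists (Ordinal (tau_le w L U x : (tau w L U x < k.+1)%N)); rewrite eqxx.
Qed.

Lemma event_stopped_in {k} (w : k.-tuple bool) L U x (P : pred int) :
  [exists l : 'I_k.+1, (tau w L U x == l) && P (Sx w x l)] =
  stopped_in (outside L U) P false x w.
Proof.
rewrite exists_tau stopped_inE size_tuple Sx_walk /tau.
by under eq_filter do rewrite /exits Sx_walk.
Qed.

Lemma eventA_stopped_in k (w : k.-tuple bool) L U x :
  eventA w L U x = stopped_in (outside L U) (fun y => y <= L) false x w.
Proof. exact: (event_stopped_in w L U x (fun y => y <= L)). Qed.

Lemma eventB_stopped_in k (w : k.-tuple bool) L U x :
  eventB w L U x = stopped_in (outside L U) (fun y => U <= y) false x w.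
Proof. exact: (event_stopped_in w L U x (fun y => U <= y)). Qed.

Lemma sum_tuple0 {V : nmodType} {T : finType} (F : seq T -> V) :
  \sum_(w : 0.-tuple T) F w = F [::].
Proof.
rewrite (eq_bigr (fun=> F [::])) => [|w _]; last by rewrite (tuple0 w).
by rewrite sumr_const card_tuple.
Qed.

Lemma sum_tupleS {V : nmodType} {T : finType} k (F : seq T -> V) :
  \sum_(w : k.+1.-tuple T) F w = \sum_(b : T) \sum_(t : k.-tuple T) F (b :: t).
Proof.
rewrite pair_big /=.
rewrite (reindex (fun bt : T * k.-tuple T => [tuple of bt.1 :: bt.2])) //=.
exists (fun t : k.+1.-tuple T => (thead t, [tuple of behead t])) => [[b t] _|t _].
  by congr (_, _); apply: val_inj.
by rewrite [RHS]tuple_eta; apply: val_inj.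
Qed.

Local Open Scope classical_set_scope.

Section HittingProbability.
Context {R : realType} (p : R) (stop target : pred int).
Hypothesis p01 : 0 < p < 1.

(* The [weight] of Defs on plain sequences, so that it splits at the head. *)
Definition seq_weight (w : seq bool) : R := \prod_(b <- w) (if b then p else 1 - p).

Definition hit_prob k s x : R :=
  \sum_(w : k.-tuple bool) seq_weight w * (stopped_in stop target s x w)%:R.

Let p_ge0 : 0 <= p. Proof. by case/andP: p01 => /ltW. Qed.
Let q_ge0 : 0 <= 1 - p. Proof. by case/andP: p01 => _ /ltW; rewrite subr_ge0. Qed.

Lemma seq_weight_ge0 w : 0 <= seq_weight w.
Proof. by apply: prodr_ge0 => -[] _; rewrite ?p_ge0 ?q_ge0. Qed.

Lemma seq_weight_cons b w : seq_weight (b :: w) = (if b then p else 1 - p) * seq_weight w.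
Proof. exact: big_cons. Qed.

Lemma sum_seq_weight k : \sum_(w : k.-tuple bool) seq_weight w = 1.
Proof.
elim: k => [|k IH]; first by rewrite sum_tuple0 /seq_weight big_nil.
rewrite sum_tupleS big_bool /=.
under eq_bigr do rewrite seq_weight_cons.
under [X in _ + X]eq_bigr do rewrite seq_weight_cons.
by rewrite -!mulr_sumr IH !mulr1 addrC subrK.
Qed.

Lemma hit_prob0 s x : hit_prob 0 s x = (target x)%:R.
Proof.
rewrite /hit_prob (sum_tuple0 (fun w => seq_weight w * (stopped_in stop target s x w)%:R)).
by rewrite /seq_weight big_nil mul1r.
Qed.

Lemma hit_probS k s x : hit_prob k.+1 s x =
  if stop x then (target x)%:R
  else p * hit_prob k true (x + step s true) + (1 - p) * hit_prob k false (x - 1).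
Proof.
rewrite /hit_prob (sum_tupleS k (fun w => seq_weight w * (stopped_in stop target s x w)%:R)).
rewrite big_bool /=.
under eq_bigr do rewrite seq_weight_cons -mulrA.
under [X in _ + X]eq_bigr do rewrite seq_weight_cons -mulrA.
rewrite -!mulr_sumr; case: (stop x) => //.
by rewrite -mulr_suml sum_seq_weight mul1r -mulrDl addrC subrK mul1r.
Qed.

Lemma hit_prob_ge0 k s x : 0 <= hit_prob k s x.
Proof. by apply: sumr_ge0 => w _; rewrite mulr_ge0 ?seq_weight_ge0. Qed.

Lemma hit_prob_le1 k s x : hit_prob k s x <= 1.
Proof.
rewrite -(sum_seq_weight k); apply: ler_sum => w _.
by rewrite ler_piMr ?seq_weight_ge0 // lern1 leq_b1.
Qed.

Hypothesis target_stop : forall y, target y -> stop y.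

Lemma hit_prob_le_succ k s x : hit_prob k s x <= hit_prob k.+1 s x.
Proof.
elim: k s x => [|k IH] s x.
  rewrite hit_prob0 hit_probS; case: ifP => // /negbT stop_x.
  have -> : target x = false by apply: contraNF stop_x; apply: target_stop.
  by rewrite addr_ge0 ?mulr_ge0 ?p_ge0 ?q_ge0 ?hit_prob_ge0.
rewrite [hit_prob k.+1 _ _]hit_probS [hit_prob k.+2 _ _]hit_probS; case: ifP => // _.
by rewrite lerD ?ler_wpM2l ?p_ge0 ?q_ge0.
Qed.

Lemma hit_prob_nondecreasing s x :
  {homo (fun k => hit_prob k s x) : k l / (k <= l)%N >-> k <= l}.
Proof. by apply/nondecreasing_seqP => k; apply: hit_prob_le_succ. Qed.

Definition absorb_prob s x : R := limn (fun k => hit_prob k s x).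

Lemma hit_prob_cvg s x : (fun k => hit_prob k s x) @ \oo --> absorb_prob s x.
Proof.
apply/cvg_ex; exists (sup (range (fun k => hit_prob k s x))).
apply: nondecreasing_cvgn; first exact: hit_prob_nondecreasing.
by exists 1 => _ [k _ <-]; apply: hit_prob_le1.
Qed.

Lemma absorb_prob_ge0 s x : 0 <= absorb_prob s x.
Proof.
apply: le_trans (hit_prob_ge0 0 s x) _.
apply: nondecreasing_cvgn_le; first exact: hit_prob_nondecreasing.
by apply/cvg_ex; exists (absorb_prob s x); apply: hit_prob_cvg.
Qed.

Lemma absorb_prob_stop s x : stop x -> absorb_prob s x = (target x)%:R.
Proof.
move=> stop_x; rewrite /absorb_prob.
have -> : (fun k => hit_prob k s x) = fun=> (target x)%:R.
  by apply/funext => -[|k]; rewrite ?hit_prob0 // hit_probS stop_x.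
exact: lim_cst.
Qed.

Lemma absorb_prob_step s x : ~~ stop x ->
  absorb_prob s x =
  p * absorb_prob true (x + step s true) + (1 - p) * absorb_prob false (x - 1).
Proof.
move=> /negbTE stop_x; apply: cvg_lim; first exact: norm_hausdorff.
rewrite -cvg_shiftS (eq_cvg _ _ (g := fun k =>
  p * hit_prob k true (x + step s true) + (1 - p) * hit_prob k false (x - 1))).
  by apply: cvgD; apply: cvgM; apply: cvg_cst || apply: hit_prob_cvg.
by move=> k /=; rewrite hit_probS stop_x.
Qed.
End HittingProbability.

Section ExitProbability.
Context {R : realType} {p : R} {L U : int} (target : pred int).
Hypothesis p01 : 0 < p < 1.
Hypothesis target_outside : forall y, target y -> outside L U y.
Local Notation exit_prob := (absorb_prob p (outside L U) target).

Lemma exit_prob_step s x : L < x < U ->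
  exit_prob s x =
  p * exit_prob true (x + step s true) + (1 - p) * exit_prob false (x - 1).
Proof. by move=> Lx; apply: absorb_prob_step => //; rewrite /outside; lia. Qed.

Lemma exit_prob_outside s x : outside L U x -> exit_prob s x = (target x)%:R.
Proof. exact: absorb_prob_stop. Qed.
End ExitProbability.

Section TwoStateSystem.
Context {R : realType} {p : R} {L U : int} {a g : int -> R} {c : R}.
Hypothesis a_step : forall x, L < x < U -> a x = p * g (x + 1) + (1 - p) * a (x - 1).

Lemma two_state_gt0 : 0 < p < 1 -> (forall y, 0 <= g y) -> 0 < a L ->
  forall x, L <= x < U -> 0 < a x.
Proof.
move=> /andP[p_gt0 p_lt1] g_ge0 aL x /andP[Lx].
have [n ->] : exists n : nat, x = L + n%:Z by exists (absz (x - L)); lia.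
elim: n {Lx} => [|n IH] xU; first by rewrite addr0.
rewrite a_step; last lia.
have -> : L + n.+1%:Z - 1 = L + n%:Z by lia.
have a_gt0 : 0 < a (L + n%:Z) by apply: IH; lia.
by rewrite ltr_wpDl ?mulr_ge0 ?mulr_gt0 ?subr_gt0 ?(ltW p_gt0).
Qed.

Hypothesis g_step : forall x, L < x < U -> g x = p * g (x + 2) + (1 - p) * a (x - 1).
Hypothesis g_top : forall y, U <= y -> g y = c.
Hypothesis LU4 : 4 <= U - L.

Lemma two_state_top1 : a (U - 1) = p * c + (1 - p) * a (U - 2).
Proof.
rewrite a_step; last lia.
have -> : U - 1 + 1 = U by lia.
by rewrite g_top // (_ : U - 1 - 1 = U - 2) //; lia.
Qed.

Lemma two_state_top2 :
  a (U - 2) = p ^+ 2 * c + p * (1 - p) * a (U - 2) + (1 - p) * a (U - 3).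
Proof.
rewrite {1}a_step; last lia.
have -> : U - 2 + 1 = U - 1 by lia.
have -> : U - 2 - 1 = U - 3 by lia.
rewrite g_step; last lia.
have -> : U - 1 + 2 = U + 1 by lia.
have -> : U - 1 - 1 = U - 2 by lia.
rewrite g_top; last lia.
ring.
Qed.

Lemma two_state_interior x : L + 1 <= x <= U - 3 ->
  a x = p * (1 - p) * a x + p * a (x + 2) - p * (1 - p) * a (x + 1) + (1 - p) * a (x - 1).
Proof.
move=> Lx.
have ax := a_step x ltac:(lia).
have gx1 := g_step (x + 1) ltac:(lia).
have ax2 := a_step (x + 2) ltac:(lia).
have e1 : x + 1 + 2 = x + 3 by lia.
have e2 : x + 1 - 1 = x by lia.
have e3 : x + 2 + 1 = x + 3 by lia.
have e4 : x + 2 - 1 = x + 1 by lia.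
rewrite e1 e2 in gx1; rewrite e3 e4 in ax2.
by rewrite {1}ax gx1 ax2; ring.
Qed.

Lemma two_state_alpha_system : c = 0 -> a U = 0 -> a L = 1 -> alpha_system p L U a.
Proof.
move=> c0 aU aL; split=> //; last exact: two_state_interior.
  by rewrite two_state_top1 c0 mulr0 add0r.
by rewrite {1}two_state_top2 c0 mulr0 add0r.
Qed.

Lemma two_state_beta_system : c = 1 -> a U = 1 -> a L = 0 -> beta_system p L U a.
Proof.
move=> c1 aU aL; split=> //; last exact: two_state_interior.
  by rewrite two_state_top1 c1 mulr1.
by rewrite {1}two_state_top2 c1 mulr1.
Qed.
End TwoStateSystem.

Definition homogeneous_system {R : pzRingType} (p : R) (L U : int) (h : int -> R) : Prop :=
  [/\ h U = 0,
      h (U - 1) = (1 - p) * h (U - 2),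
      h (U - 2) = p * (1 - p) * h (U - 2) + (1 - p) * h (U - 3)
    & forall x : int, L + 1 <= x <= U - 3 ->
        h x = p * (1 - p) * h x + p * h (x + 2) - p * (1 - p) * h (x + 1)
              + (1 - p) * h (x - 1)].

Section HomogeneousSystem.
Context {R : fieldType} {p : R} {L U : int}.
Hypothesis q_neq0 : 1 - p != 0.
Local Notation homogeneous_system := (homogeneous_system p L U).

Lemma homogeneous_system_sub c {h1 h2} :
  homogeneous_system h1 -> homogeneous_system h2 ->
  homogeneous_system (fun x => h1 x - c * h2 x).
Proof.
case=> A0 A1 A2 A3 [B0 B1 B2 B3]; split.
- by rewrite A0 B0 mulr0 subr0.
- by rewrite A1 B1; ring.
- by rewrite {1}A2 {1}B2; ring.
- by move=> x Hx; rewrite {1}(A3 x Hx) {1}(B3 x Hx); ring.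
Qed.

Lemma homogeneous_system_eq0_top {h} : homogeneous_system h -> h (U - 2) = 0 ->
  forall x, L <= x <= U -> h x = 0.
Proof.
case=> h0 h1 h2 h3 hU2.
have q_cancel y : (1 - p) * y = 0 -> y = 0.
  by move/eqP; rewrite mulf_eq0 (negbTE q_neq0) => /eqP.
suff down n : L <= U - n%:Z -> h (U - n%:Z) = 0.
  by move=> x Lx; rewrite -(down (absz (U - x))); [congr (h _) | ]; lia.
elim/ltn_ind: n => -[|[|[|[|n]]]] IH Ln.
- by rewrite subr0.
- by rewrite h1 hU2 mulr0.
- exact: hU2.
- by apply: q_cancel; move: h2; rewrite hU2 mulr0 add0r => <-.
have y0 := IH n.+3 ltac:(lia) ltac:(lia).
have y1 := IH n.+2 ltac:(lia) ltac:(lia).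
have y2 := IH n.+1 ltac:(lia) ltac:(lia).
have := h3 (U - n.+3%:Z) ltac:(lia).
have -> : U - n.+3%:Z + 1 = U - n.+2%:Z by lia.
have -> : U - n.+3%:Z + 2 = U - n.+1%:Z by lia.
have -> : U - n.+3%:Z - 1 = U - n.+4%:Z by lia.
rewrite y0 y1 y2 !mulr0 subr0 !add0r => /esym.
exact: q_cancel.
Qed.

Lemma homogeneous_system_eq0 {h a} :
  homogeneous_system h -> h L = 0 ->
  homogeneous_system a -> a L != 0 -> a (U - 2) != 0 ->
  forall x, L <= x <= U -> h x = 0.
Proof.
move=> hh hL ha aL aU2 x Lx.
pose c := h (U - 2) / a (U - 2).
have hca := homogeneous_system_eq0_top (homogeneous_system_sub c hh ha).
have {}hca : forall y, L <= y <= U -> h y - c * a y = 0.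
  by apply: hca; rewrite /c divfK ?subrr.
have c0 : c = 0.
  have /eqP := hca L ltac:(lia).
  by rewrite hL sub0r oppr_eq0 mulf_eq0 (negbTE aL) orbF => /eqP.
by have := hca x Lx; rewrite c0 mul0r subr0.
Qed.
End HomogeneousSystem.

Section Uniqueness.
Context {R : realType} {p : R} {L U : int}.
Hypothesis q_neq0 : 1 - p != 0.

Lemma alpha_system_homogeneous {f} : alpha_system p L U f -> homogeneous_system p L U f.
Proof. by case. Qed.

Lemma beta_system_sub {f g} : beta_system p L U f -> beta_system p L U g ->
  homogeneous_system p L U (fun x => f x - g x).
Proof.
case=> A0 A1 A2 A3 _ [B0 B1 B2 B3 _]; split.
- by rewrite A0 B0 subrr.
- by rewrite A1 B1; ring.
- by rewrite {1}A2 {1}B2; ring.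
- by move=> x Hx; rewrite {1}(A3 x Hx) {1}(B3 x Hx); ring.
Qed.

Lemma alpha_system_uniq a f : alpha_system p L U a -> a (U - 2) != 0 ->
  alpha_system p L U f -> forall x, L <= x <= U -> f x = a x.
Proof.
move=> a_sys aU2 f_sys x Lx; apply/eqP; rewrite -subr_eq0 -[a x]mul1r; apply/eqP.
have [_ _ _ _ aL] := a_sys; have [_ _ _ _ fL] := f_sys.
have hom_a := alpha_system_homogeneous a_sys.
have hom_fa := homogeneous_system_sub 1 (alpha_system_homogeneous f_sys) hom_a.
apply: (homogeneous_system_eq0 q_neq0 hom_fa _ hom_a) => //.
  by rewrite aL fL mul1r subrr.
by rewrite aL oner_neq0.
Qed.

Lemma beta_system_uniq a b f : alpha_system p L U a -> a (U - 2) != 0 ->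
  beta_system p L U b -> beta_system p L U f -> forall x, L <= x <= U -> f x = b x.
Proof.
move=> a_sys aU2 b_sys f_sys x Lx; apply/eqP; rewrite -subr_eq0; apply/eqP.
have [_ _ _ _ aL] := a_sys; have [_ _ _ _ bL] := b_sys; have [_ _ _ _ fL] := f_sys.
apply: (homogeneous_system_eq0 q_neq0 (beta_system_sub f_sys b_sys) _
          (alpha_system_homogeneous a_sys)) => //.
  by rewrite bL fL subrr.
by rewrite aL oner_neq0.
Qed.
End Uniqueness.

Section AlphaBeta.
Context {R : realType} {p : R} {L U : int}.
Hypothesis p01 : 0 < p < 1.
Hypothesis LU4 : 4 <= U - L.

Lemma alpha_exit_prob : alpha p L U = absorb_prob p (outside L U) (fun y => y <= L) false.
Proof.
apply/funext => x; congr (limn _); apply/funext => k.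
by apply: eq_bigr => w _; rewrite eventA_stopped_in.
Qed.

Lemma beta_exit_prob : beta p L U = absorb_prob p (outside L U) (fun y => U <= y) false.
Proof.
apply/funext => x; congr (limn _); apply/funext => k.
by apply: eq_bigr => w _; rewrite eventB_stopped_in.
Qed.

Lemma alpha_system_alpha : alpha_system p L U (alpha p L U).
Proof.
have below_outside y : y <= L -> outside L U y by rewrite /outside => ->.
rewrite alpha_exit_prob.
apply: (two_state_alpha_system (g := absorb_prob p _ _ true) (c := 0)) => // [x Lx|x Lx|y Uy||].
- exact: exit_prob_step.
- exact: exit_prob_step.
- rewrite exit_prob_outside; last by rewrite /outside; lia.
  by have -> : (y <= L) = false by lia.
- rewrite exit_prob_outside; last by rewrite /outside; lia.
  by have -> : (U <= L) = false by lia.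
- by rewrite exit_prob_outside ?/outside (le_refl L).
Qed.

Lemma beta_system_beta : beta_system p L U (beta p L U).
Proof.
have above_outside y : U <= y -> outside L U y by rewrite /outside => ->; rewrite orbT.
rewrite beta_exit_prob.
apply: (two_state_beta_system (g := absorb_prob p _ _ true) (c := 1)) => // [x Lx|x Lx|y Uy||].
- exact: exit_prob_step.
- exact: exit_prob_step.
- by rewrite exit_prob_outside ?/outside Uy ?orbT.
- by rewrite exit_prob_outside ?/outside (le_refl U) ?orbT.
- rewrite exit_prob_outside; last by rewrite /outside (le_refl L).
  by have -> : (U <= L) = false by lia.
Qed.

Lemma alpha_gt0 x : L <= x < U -> 0 < alpha p L U x.
Proof.
have below_outside y : y <= L -> outside L U y by rewrite /outside => ->.
rewrite alpha_exit_prob; apply: (two_state_gt0 _ p01) => [y Ly|y|].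
- exact: exit_prob_step.
- exact: absorb_prob_ge0.
- by rewrite exit_prob_outside ?/outside (le_refl L).
Qed.
End AlphaBeta.

Theorem theorem2p2 (R : realType) (p : R) (L U : int) :
  0 < p < 1 -> 4 <= U - L ->
  (alpha_system p L U (alpha p L U) /\
   forall f : int -> R, alpha_system p L U f ->
     forall x : int, L <= x <= U -> f x = alpha p L U x) /\
  (beta_system p L U (beta p L U) /\
   forall f : int -> R, beta_system p L U f ->
     forall x : int, L <= x <= U -> f x = beta p L U x).
Proof.
move=> p01 LU4.
have q_neq0 : 1 - p != 0 by rewrite subr_eq0 eq_sym lt_eqF //; case/andP: p01.
have alpha_top : alpha p L U (U - 2) != 0 by rewrite gt_eqF // alpha_gt0 //; lia.
have alpha_sys := alpha_system_alpha p01 LU4.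
split; split=> [|f f_sys x Lx].
- exact: alpha_sys.
- exact: alpha_system_uniq alpha_sys alpha_top f_sys x Lx.
- exact: beta_system_beta.
- exact: beta_system_uniq alpha_sys alpha_top (beta_system_beta p01 LU4) f_sys x Lx.
Qed.
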